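(* Let $\mathcal T=(S,\Sigma,\kappa)$ be an STS and $B\in\Sigma$. Suppose $A\in\Sigma$ is an attractor, i.e., $\mathbb P^{\mathcal T}_\mu(\mathbf{GF}A)=1$ for every $\mu\in\mathrm{Dist}(S)$, and suppose there is $p>0$ such that for every $\nu\in\mathrm{Dist}(S)$ with $\nu(A\cap\overline{\widetilde B})=1$ we have $\mathbb P^{\mathcal T}_\nu(\mathbf F B)\ge p$. Then $\mathcal T$ is decisive with respect to $B$.
   Context: A stochastic transition system (STS) is a triple $\mathcal T=(S,\Sigma,\kappa)$ where $(S,\Sigma)$ is a measurable space and $\kappa:S\times\Sigma\to[0,1]$ is a Markov kernel. $\mathrm{Dist}(S)$: probability distributions on $(S,\Sigma)$; $\delta_s$: Dirac at $s$. $\mathbb P^{\mathcal T}_\mu$ is the probability measure on runs $S^\omega$ (with the $\sigma$-algebra generated by cylinders) induced by initial distribution $\mu$ and kernel $\kappa$. $\overline C=S\setminus C$; $\mathbf F B$: runs visiting $B$ at some step; $\mathbf{GF}A$: runs visiting $A$ infinitely often. $\widetilde B=\{s\in S:\mathbb P^{\mathcal T}_{\delta_s}(\mathbf F B)=0\}$ (assumed measurable). $\mathcal T$ is decisive w.r.t. $B$ if for every $\mu$, $\mathbb P^{\mathcal T}_\mu(\mathbf F B\vee\mathbf F\widetilde B)=1$. *)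

From HB Require Import structures.
From mathcomp Require Import all_boot all_order all_algebra.
From mathcomp Require Import all_classical all_reals all_analysis.

Set Implicit Arguments.
Unset Strict Implicit.
Unset Printing Implicit Defensive.

Import Order.TTheory GRing.Theory Num.Theory.
Local Open Scope classical_set_scope.
Local Open Scope ring_scope.

Section STS.
Context d (S : measurableType d) (R : realType).

Definition run := nat -> S.

Definition cyl (n : nat) (As : nat -> set S) : set run :=
  [set w | forall i, (i <= n)%N -> As i (w i)].

Definition cylinders : set (set run) :=
  [set C | exists n (As : nat -> set S),
     (forall i, measurable (As i)) /\ C = cyl n As].

Definition runs := g_sigma_algebraType cylinders.

(** P is the run measure P_mu induced by the initial distribution mu and the
    Markov kernel k: initial law mu, and the one-step transition from w n
    to w (n+1) is given by k (w n), for every cylinder history. These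
    equations determine P uniquely on the cylinder sigma-algebra. *)
Definition is_run_measure (k : R.-pker S ~> S) (mu : probability S R)
    (P : probability runs R) : Prop :=
  (forall A : set S, measurable A -> P [set w : runs | A (w 0%N)] = mu A) /\
  (forall (n : nat) (As : nat -> set S) (A : set S),
      (forall i, measurable (As i)) -> measurable A ->
      P (cyl n As `&` [set w : runs | A (w n.+1)]) =
      (\int[P]_(w in (cyl n As : set runs)) k (w n) A)%E).

Definition evF (B : set S) : set runs := [set w | exists n, B (w n)].

Definition evGF (A : set S) : set runs :=
  [set w | forall m, exists2 n, (m <= n)%N & A (w n)].

Definition tildeB (Pr : probability S R -> probability runs R) (B : set S)
  : set S := [set s | Pr (\d_s : probability S R) (evF B) = 0%E].

Definition decisive (Pr : probability S R -> probability runs R) (B : set S)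
  : Prop :=
  forall mu : probability S R, Pr mu (evF B `|` evF (tildeB Pr B)) = 1%E.

End STS.

From HB Require Import structures.
From mathcomp Require Import all_boot all_order all_algebra.
From mathcomp Require Import all_classical all_reals all_analysis.
From mathcomp Require Import measurable_realfun zify lra.
Import Order.TTheory GRing.Theory Num.Theory.
Local Open Scope classical_set_scope.
Local Open Scope ring_scope.

Set Implicit Arguments.
Unset Strict Implicit.
Unset Printing Implicit Defensive.

(** Let Bt be the set of states from which B is almost surely never reached,
    T := A `&` ~` Bt and C := ~` B `&` ~` Bt.  Decisiveness w.r.t. B says that
    the event G C of staying in C forever is null.  Since A is an attractor,
    almost every run of G C visits T infinitely often.  Such a run has, for
    every m, a first visit to T after time m; conditioning on the history up
    to that visit, the current state is distributed according to some
    distribution concentrated on T, from which B is reached with probability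
    at least p (Markov property).  Summing over the first-visit times gives
    P(G C) <= (1 - p) P(stay in C up to time m), hence P(G C) <= (1 - p) P(G C)
    in the limit, so P(G C) = 0. *)

Section cylinders.
Context d (S : measurableType d).

Definition evG (C : set S) : set (runs S) := [set w | forall i, C (w i)].

Lemma cyl_measurable n (As : nat -> set S) : (forall i, measurable (As i)) ->
  measurable (cyl n As : set (runs S)).
Proof. by move=> mAs; apply: sub_gen_smallest; exists n, As. Qed.

Lemma eq_cyl n (As Bs : nat -> set S) :
  (forall i, (i <= n)%N -> As i = Bs i) -> cyl n As = cyl n Bs.
Proof.
by move=> eqAB; apply/seteqP; split => w /= Hw i lin;
  [rewrite -eqAB | rewrite eqAB] => //; exact: Hw.
Qed.

Lemma cyl0 (As : nat -> set S) : cyl 0 As = [set w : run S | As 0%N (w 0%N)].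
Proof.
apply/seteqP; split => w /=; first exact.
by move=> H i; rewrite leqn0 => /eqP ->.
Qed.

Lemma cylS n (As : nat -> set S) :
  cyl n.+1 As = cyl n As `&` [set w : run S | As n.+1 (w n.+1)].
Proof.
apply/seteqP; split => w /=.
  by move=> H; split => [i lin|]; apply: H => //; exact: leqW.
move=> [H1 H2] i; rewrite leq_eqVlt => /orP[/eqP ->//|]; rewrite ltnS; exact: H1.
Qed.

Definition set_at (As : nat -> set S) n (X : set S) : nat -> set S :=
  fun i => if i == n then As i `&` X else As i.

Lemma set_at_measurable (As : nat -> set S) n X :
  (forall i, measurable (As i)) -> measurable X ->
  forall i, measurable (set_at As n X i).
Proof.
by move=> mAs mX i; rewrite /set_at; case: ifP => _ //; exact: measurableI.
Qed.

Lemma setI_cyl_at n (As : nat -> set S) X :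
  [set w : run S | X (w n)] `&` cyl n As = cyl n (set_at As n X).
Proof.
apply/seteqP; split => w /=.
  move=> [Xw H] i lin; rewrite /set_at; case: eqP => [->|_]; last exact: H.
  by split => //; exact: H.
move=> H; split; first by have := H n (leqnn n); rewrite /set_at eqxx => -[].
by move=> i lin; have := H i lin; rewrite /set_at; case: eqP => [_ []|].
Qed.

Lemma coord_measurable N : measurable_fun setT (fun w : runs S => w N).
Proof.
move=> _ X mX; rewrite setTI.
have -> : (fun w : runs S => w N) @^-1` X =
    cyl N (fun i => if i == N then X else setT).
  apply/seteqP; split => w /=; first by move=> Xw i _; case: eqP => [->|].
  by move=> H; have := H N (leqnn N); rewrite eqxx.
by apply: cyl_measurable => i; case: ifP.
Qed.

Lemma coord_preimage_measurable N (X : set S) : measurable X ->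
  measurable [set w : runs S | X (w N)].
Proof. by move=> mX; have := coord_measurable N measurableT mX; rewrite setTI. Qed.

Lemma always_from_measurable n (C : set S) : measurable C ->
  measurable [set w : runs S | forall i, C (w (n + i)%N)].
Proof.
move=> mC; rewrite (_ : [set w | _] = \bigcap_i [set w : runs S | C (w (n + i)%N)]).
  by apply: bigcapT_measurable => i; exact: coord_preimage_measurable.
by apply/seteqP; split => w /= H i; [move=> _; exact: H | exact: H i Logic.I].
Qed.

Lemma evF_measurable (B : set S) : measurable B -> measurable (evF B : set (runs S)).
Proof.
move=> mB; rewrite (_ : evF B = \bigcup_i [set w : runs S | B (w i)]).
  by apply: bigcupT_measurable => i; exact: coord_preimage_measurable.
by apply/seteqP; split => w /= [i]; [exists i | move=> _ Bi; exists i].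
Qed.

Lemma evGF_measurable (A : set S) : measurable A -> measurable (evGF A : set (runs S)).
Proof.
move=> mA; rewrite (_ : evGF A = \bigcap_m \bigcup_j [set w : runs S | A (w (m + j)%N)]).
  apply: bigcapT_measurable => m; apply: bigcupT_measurable => j.
  exact: coord_preimage_measurable.
apply/seteqP; split => w /= H m.
  by move=> _; have [n mn An] := H m; exists (n - m)%N; rewrite ?subnKC.
by have [j _ Aj] := H m Logic.I; exists (m + j)%N; rewrite ?leq_addr.
Qed.

Lemma cyl_nonincreasing (As : nat -> set S) :
  {homo (fun j => cyl j As : set (runs S)) : n m / (n <= m)%N >-> (n >= m)%O}.
Proof. by move=> a b ab; apply/subsetPset => w H i ia; apply: H; exact: leq_trans ia ab. Qed.

Lemma bigcap_cyl (C : set S) : \bigcap_j (cyl j (fun _ => C) : set (runs S)) = evG C.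
Proof.
apply/seteqP; split => w /=.
  by move=> H n; apply: (H n Logic.I n).
by move=> H j _ i _; exact: H.
Qed.

Lemma evG_measurable (C : set S) : measurable C -> measurable (evG C).
Proof.
by move=> mC; rewrite -bigcap_cyl; apply: bigcapT_measurable => j; exact: cyl_measurable.
Qed.

Lemma setC_evF (B : set S) : ~` evF B = evG (~` B).
Proof.
by apply/seteqP; split => w /= H; [move=> i Bi; apply: H; exists i | move=> [i /H]].
Qed.

Lemma evF_setU (B B' : set S) :
  evF B `|` evF B' = ~` evG (~` B `&` ~` B').
Proof.
apply/seteqP; split => w /=; first by move=> [[i Bi]|[i Bi]] /(_ i) [].
move=> nG; apply: contrapT => nF; apply: nG => i.
by split => Bi; apply: nF; [left | right]; exists i.
Qed.

Lemma evG_setI_evGF (C D A : set S) :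
  C `<=` D -> evG C `&` evGF A = evG C `&` evGF (A `&` D).
Proof.
move=> CD; apply/seteqP; split => w [Cw GFw]; split => // m;
  have [n mn An] := GFw m; exists n => //; last by case: An.
by split => //; exact: CD (Cw n).
Qed.

End cylinders.

Section integral_transfer.
Local Open Scope ereal_scope.
Context dY (Y : measurableType dY) (R : realType).
Import HBNNSimple.

Lemma integral_nnsfun_comp dX (X : measurableType dX) (m : {measure set X -> \bar R})
    (D : set X) (mD : measurable D) (phi : X -> Y) (mphi : measurable_fun setT phi)
    (h : {nnsfun Y >-> R}) :
  \int[m]_(x in D) (h (phi x))%:E =
  \sum_(r \in range h) r%:E * m (phi @^-1` (h @^-1` [set r]) `&` D).
Proof.
have mpre r : measurable (phi @^-1` (h @^-1` [set r])).
  by rewrite -(setTI (_ @^-1` _)); exact: mphi.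
under eq_integral do rewrite fimfunE -fsumEFin//.
rewrite ge0_integral_fsum//; last 2 first.
- move=> r; apply/measurable_EFinP; apply: measurable_funTS.
  by apply: measurable_funM => //; apply: measurableT_comp mphi; exact: measurable_indic.
- by move=> r x _; rewrite EFinM nnfun_muleindic_ge0.
apply: eq_fsbigr => r _.
rewrite (@integralZl_indic _ _ _ _ _ _ (fun r => phi @^-1` (h @^-1` [set r]))) //.
  by rewrite integral_indic.
by move=> r0; rewrite preimage_nnfun0 // preimage_set0.
Qed.

Lemma nnsfun_comp_measurable dX (X : measurableType dX) (D : set X)
    (phi : X -> Y) (mphi : measurable_fun setT phi) (h : {nnsfun Y >-> R}) :
  measurable_fun D (fun x => (h (phi x))%:E).
Proof.
have mh : measurable_fun setT (EFin \o h) by exact/measurable_EFinP.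
exact: measurable_funTS (measurableT_comp mh mphi).
Qed.

Lemma integral_comp_approx dX (X : measurableType dX) (m : {measure set X -> \bar R})
    (D : set X) (mD : measurable D) (phi : X -> Y) (mphi : measurable_fun setT phi)
    (f : Y -> \bar R) (mf : measurable_fun setT f) : (forall y, 0 <= f y) ->
  \int[m]_(x in D) f (phi x) =
  limn (fun n => \int[m]_(x in D) (nnsfun_approx measurableT mf n (phi x))%:E).
Proof.
move=> f0; rewrite -monotone_convergence //=.
- apply: eq_integral => x _; apply/esym/cvg_lim => //.
  exact: cvg_nnsfun_approx.
- by move=> n; exact: nnsfun_comp_measurable.
- by move=> n x _; rewrite lee_fin.
- by move=> x _ a b ab; rewrite lee_fin; exact/lefP/nd_nnsfun_approx.
Qed.

Lemma integral_transfer d1 d2 (X1 : measurableType d1) (X2 : measurableType d2)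
    (m1 : {measure set X1 -> \bar R}) (m2 : {measure set X2 -> \bar R})
    (D1 : set X1) (D2 : set X2) (mD1 : measurable D1) (mD2 : measurable D2)
    (phi1 : X1 -> Y) (phi2 : X2 -> Y)
    (mphi1 : measurable_fun setT phi1) (mphi2 : measurable_fun setT phi2)
    (c : R) : (0 <= c)%R ->
  (forall E, measurable E ->
     m1 (phi1 @^-1` E `&` D1) = c%:E * m2 (phi2 @^-1` E `&` D2)) ->
  forall f : Y -> \bar R, measurable_fun setT f -> (forall y, 0 <= f y) ->
  \int[m1]_(x in D1) f (phi1 x) = c%:E * \int[m2]_(x in D2) f (phi2 x).
Proof.
move=> c0 law12 f mf f0.
rewrite (integral_comp_approx m1 mD1 mphi1 mf f0) (integral_comp_approx m2 mD2 mphi2 mf f0).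
rewrite -limeMl//.
  congr (limn _); apply/funext => n /=.
  rewrite !integral_nnsfun_comp// ge0_mule_fsumr; last first.
    move=> r; have [r0|r0] := leP 0%R r; first by rewrite mule_ge0 ?measure_ge0.
    by rewrite preimage_nnfun0 // preimage_set0 set0I measure0 mule0.
  by apply: eq_fsbigr => r _; rewrite law12 // muleCA.
apply/ereal_nondecreasing_is_cvgn => a b ab; apply: ge0_le_integral => //.
- by move=> x _; rewrite lee_fin.
- exact: nnsfun_comp_measurable.
- exact: nnsfun_comp_measurable.
- by move=> x _; rewrite lee_fin; exact/lefP/nd_nnsfun_approx.
Qed.

End integral_transfer.

Lemma le_measure_bigcap dT (T : measurableType dT) (R : realType)
    (Q : probability T R) (F : nat -> set T) (x : \bar R) (a : R) : (0 <= a)%R ->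
  (forall j, measurable (F j)) -> {homo F : n m / (n <= m)%N >-> (n >= m)%O} ->
  (forall j, (x <= a%:E * Q (F j))%E) -> (x <= a%:E * Q (\bigcap_j F j))%E.
Proof.
move=> a0 mF F_noninc xF.
have QF0 : (Q (F 0%N) < +oo)%E.
  by apply: (le_lt_trans (probability_le1 _ (mF 0%N))); rewrite ltry.
have cvgQ := nonincreasing_cvg_mu QF0 mF (bigcapT_measurable mF) F_noninc.
have cvgaQ := cvgeZl (y := a%:E) (fin_numE _) cvgQ.
rewrite -(cvg_lim _ cvgaQ) //; apply: lime_ge; first exact: cvgP cvgaQ.
exact: nearW.
Qed.

Lemma probability_setI_full dT (T : measurableType dT) (R : realType)
    (P : probability T R) (E F : set T) : measurable E -> measurable F ->
  P E = 1%E -> P (F `&` E) = P F.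
Proof.
move=> mE mF PE1.
rewrite [RHS](measureDI P mF mE) [X in _ = X + _](_ : _ = 0%E) ?add0e //.
apply/eqP; rewrite eq_le measure_ge0 andbT.
apply: (@le_trans _ _ (P (~` E))); last by rewrite probability_setC // PE1 subee.
by apply: le_measure; rewrite ?inE; [exact: measurableD | exact: measurableC | move=> x []].
Qed.

Lemma contraction_eq0 (R : realType) (x : \bar R) (q : R) : 0 < q ->
  (0 <= x)%E -> x \is a fin_num -> (x <= (1 - q)%:E * x)%E -> x = 0%E.
Proof.
move=> q_gt0; case: x => [r| |] //; rewrite lee_fin => r_ge0 _.
by rewrite -EFinM lee_fin => r_le; congr EFin; nra.
Qed.

Section markov_cylinders.
Local Open Scope ereal_scope.
Context d (S : measurableType d) (R : realType) (k : R.-pker S ~> S).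
Variables (P Q : probability (runs S) R) (nu : probability S R).
Hypothesis P_step : forall (n : nat) (As : nat -> set S) (A : set S),
  (forall i, measurable (As i)) -> measurable A ->
  P (cyl n As `&` [set w : runs S | A (w n.+1)]) =
  \int[P]_(w in (cyl n As : set (runs S))) k (w n) A.
Hypothesis Q_run : is_run_measure k nu Q.
Variables (n : nat) (As : nat -> set S) (mAs : forall i, measurable (As i)).
Variables (c : R) (c0 : (0 <= c)%R).
Hypothesis law_at_n : forall X, measurable X ->
  P (cyl n (set_at As n X)) = c%:E * nu X.

Definition concat_sets (Bs : nat -> set S) i :=
  if (i < n)%N then As i else if i == n then As n `&` Bs 0%N else Bs (i - n)%N.

Lemma concat_sets_measurable Bs : (forall i, measurable (Bs i)) ->
  forall i, measurable (concat_sets Bs i).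
Proof.
move=> mBs i; rewrite /concat_sets; case: ifP => _ //; case: ifP => _ //.
exact: measurableI.
Qed.

(** Markov property on cylinders: after time n, P on cyl n As behaves as
    c times the run measure Q started from nu. *)
Lemma markov_cyl m Bs : (forall i, measurable (Bs i)) ->
  P (cyl (n + m) (concat_sets Bs)) = c%:E * Q (cyl m Bs).
Proof.
elim: m Bs => [|m IH] Bs mBs.
  rewrite addn0 (@eq_cyl _ _ _ _ (set_at As n (Bs 0%N))); last first.
    move=> i lin; rewrite /concat_sets /set_at; case: ltngtP => [//| |->//].
    by move=> ni; exfalso; lia.
  by rewrite law_at_n // cyl0 Q_run.1.
rewrite addnS !cylS.
have -> : concat_sets Bs (n + m).+1 = Bs m.+1.
  rewrite /concat_sets ifF; last by apply/negbTE; rewrite -leqNgt; lia.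
  by rewrite ifF; [congr Bs; lia | apply/eqP; lia].
rewrite P_step //; last exact: concat_sets_measurable.
rewrite Q_run.2 //.
have mD1 : measurable (cyl (n + m) (concat_sets Bs) : set (runs S)).
  exact: cyl_measurable (concat_sets_measurable mBs).
have mD2 : measurable (cyl m Bs : set (runs S)) by exact: cyl_measurable.
have law : forall E, measurable E ->
    P ((fun w : runs S => w (n + m)%N) @^-1` E `&` cyl (n + m) (concat_sets Bs)) =
    c%:E * Q ((fun w : runs S => w m) @^-1` E `&` cyl m Bs).
  move=> E mE; rewrite (setI_cyl_at (n + m)%N _ E) (setI_cyl_at m Bs E).
  rewrite -IH; last exact: set_at_measurable.
  congr (P _); apply: eq_cyl => i lin; rewrite /concat_sets /set_at.
  case: ltngtP => [ilt|igt|->].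
  + by rewrite ifF //; apply/eqP; lia.
  + rewrite (_ : (i - n == m)%N = (i == n + m)%N) //.
    by apply/idP/idP => /eqP h; apply/eqP; lia.
  + case: m {IH lin mD1 mD2} => [|m]; first by rewrite addn0 eqxx setIA.
    by rewrite ifF //; apply/eqP; lia.
exact: (integral_transfer mD1 mD2 (coord_measurable _) (coord_measurable _) c0 law
  (measurable_kernel k _ (mBs m.+1)) (fun y => measure_ge0 _ _)).
Qed.

Lemma markov_always_after (C : set S) : measurable C ->
  P (cyl n As `&` [set w | forall i, C (w (n + i)%N)]) <= c%:E * Q (evG C).
Proof.
move=> mC; rewrite -bigcap_cyl.
apply: le_measure_bigcap => //; first by move=> j; exact: cyl_measurable.
  exact: cyl_nonincreasing.
move=> j; rewrite -markov_cyl //; apply: le_measure; rewrite ?inE.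
- by apply: measurableI; [exact: cyl_measurable | exact: always_from_measurable].
- by apply: cyl_measurable; exact: concat_sets_measurable.
move=> w [Kw Cw] i lei; rewrite /concat_sets; case: (ltngtP i n) => [ilt|igt|->].
- exact: Kw (ltnW ilt).
- by have := Cw (i - n)%N; rewrite subnKC // ltnW.
- by split; [exact: Kw (leqnn n) | have := Cw 0%N; rewrite addn0].
Qed.

End markov_cylinders.

Section law_on.
Local Open Scope ereal_scope.
Context d (S : measurableType d) (R : realType).
Variables (P : {measure set (runs S) -> \bar R}) (K : set (runs S)) (N : nat).
Variable (mK : measurable K).

(** The (unnormalized) law of the state at time N on the runs of K; the
    measurability proof of K is an argument so that the measure structure
    below can be attached to law_on. *)
Definition law_on (_ : measurable K) (X : set S) : \bar R :=
  P ([set w : runs S | X (w N)] `&` K).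

Let law_on0 : law_on mK set0 = 0.
Proof. by rewrite /law_on (_ : [set w : runs S | set0 (w N)] = set0) ?set0I ?measure0. Qed.

Let law_on_ge0 X : 0 <= law_on mK X.
Proof. exact: measure_ge0. Qed.

Let law_on_sigma_additive : semi_sigma_additive (law_on mK).
Proof.
move=> F mF tF mUF; rewrite /law_on.
have -> : [set w : runs S | (\bigcup_n F n) (w N)] `&` K =
    \bigcup_n ([set w : runs S | F n (w N)] `&` K).
  apply/seteqP; split => w /=; first by move=> [[i _ Fi] Kw]; exists i.
  by move=> [i _ [Fi Kw]]; split => //; exists i.
apply: measure_semi_sigma_additive.
- by move=> i; apply: measurableI => //; exact: coord_preimage_measurable.
- apply/trivIsetP => i j _ _ ij; move/trivIsetP: tF => /(_ i j Logic.I Logic.I ij) Fij.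
  apply/seteqP; split => // w /= [[Fi _] [Fj _]].
  by have : (F i `&` F j) (w N) by []; rewrite Fij.
- apply: bigcupT_measurable => i; apply: measurableI => //.
  exact: coord_preimage_measurable.
Qed.

HB.instance Definition _ :=
  isMeasure.Build _ _ _ (law_on mK) law_on0 law_on_ge0 law_on_sigma_additive.

End law_on.

Lemma mnormalizeE d (T : measurableType d) (R : realType)
    (mu : {measure set T -> \bar R}) (P0 : probability T R) (c : R) :
  mu setT = c%:E -> (0 < c)%R -> forall X, mnormalize mu P0 X = (mu X * (c^-1)%:E)%E.
Proof. by move=> muT c_gt0 X; rewrite /mnormalize muT ifF // eqe gt_eqF. Qed.

Lemma conditional_law d (S : measurableType d) (R : realType)
    (P : probability (runs S) R) n (As : nat -> set S) (c : R)
    (mu0 : probability S R) : (forall i, measurable (As i)) ->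
  P (cyl n As) = c%:E -> (0 < c)%R ->
  exists nu : probability S R, forall X, measurable X ->
    P (cyl n (set_at As n X)) = (c%:E * nu X)%E.
Proof.
move=> mAs PKc c_gt0; have mK := cyl_measurable n mAs.
have evidence : law_on P n mK setT = c%:E.
  by rewrite /law_on (_ : [set w : runs S | setT (w n)] = setT) // setTI.
exists (mnormalize (law_on P n mK) mu0) => X mX.
transitivity (c%:E * (law_on P n mK X * (c^-1)%:E))%E.
  by rewrite /law_on setI_cyl_at muleCA -EFinM mulfV ?gt_eqF // mule1.
by congr (_ * _)%E; apply/esym/mnormalizeE.
Qed.

Section one_visit_bound.
Local Open Scope ereal_scope.
Context d (S : measurableType d) (R : realType) (k : R.-pker S ~> S).
Variable Pr : probability S R -> probability (runs S) R.
Hypothesis HPr : forall mu, is_run_measure k mu (Pr mu).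
Variables (B T : set S) (mB : measurable B) (mT : measurable T) (p : R).
Hypothesis reach_B : forall nu : probability S R, nu T = 1 -> p%:E <= Pr nu (evF B).

Lemma never_after_bound mu n (As : nat -> set S) : (forall i, measurable (As i)) ->
  As n `<=` T ->
  Pr mu (cyl n As `&` [set w | forall i, ~ B (w (n + i)%N)]) <=
  (1 - p)%:E * Pr mu (cyl n As).
Proof.
move=> mAs AsT; set P := Pr mu; have mK := cyl_measurable n mAs.
have [PK0|PK_neq0] := eqVneq (P (cyl n As)) 0.
  rewrite PK0 mule0 -PK0; apply: measureIl mK _.
  exact: always_from_measurable (measurableC mB).
have PK_fin : P (cyl n As) \is a fin_num.
  rewrite ge0_fin_numE ?measure_ge0 //.
  by apply: le_lt_trans (probability_le1 _ mK) _; rewrite ltry.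
set c := fine (P (cyl n As)); have PKc : P (cyl n As) = c%:E by rewrite fineK.
have c_gt0 : (0 < c)%R by rewrite -lte_fin -PKc lt0e PK_neq0 measure_ge0.
have [nu law_nu] := conditional_law mu mAs PKc c_gt0.
have nuT : nu T = 1.
  apply/le_anti; rewrite probability_le1 //=.
  rewrite -(@lee_pmul2l _ c%:E) ?lte_fin // mule1 -law_nu //.
  rewrite (@eq_cyl _ _ _ _ As) ?PKc // => i _.
  by rewrite /set_at; case: eqP => // ->; exact/setIidl.
have nu_reach := reach_B nuT.
apply: le_trans (markov_always_after (HPr mu).2 (HPr nu) mAs (ltW c_gt0) law_nu
  (measurableC mB)) _.
rewrite -setC_evF probability_setC; last exact: evF_measurable.
rewrite PKc [X in _ <= X]muleC; apply: lee_wpmul2l; first by rewrite lee_fin ltW.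
have nuF_fin : Pr nu (evF B) \is a fin_num.
  rewrite ge0_fin_numE ?measure_ge0 //.
  by apply: le_lt_trans (probability_le1 _ (evF_measurable mB)) _; rewrite ltry.
by rewrite -(fineK nuF_fin) -EFinB lee_fin lerB // -lee_fin fineK.
Qed.

End one_visit_bound.

Section first_entry.
Context d (S : measurableType d) (B C T : set S) (m : nat).

(** Constraints of the runs that stay in C up to time m, do not visit B
    afterwards, and first visit T after time m at time m + j + 1. *)
Definition entry_sets (j i : nat) : set S :=
  if (i <= m)%N then C else if (i < m + j.+1)%N then ~` B `&` ~` T else T `&` ~` B.

Definition entry_cyl (j : nat) : set (runs S) := cyl (m + j.+1) (entry_sets j).

Lemma entry_sets_measurable j : measurable B -> measurable C -> measurable T ->
  forall i, measurable (entry_sets j i).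
Proof.
move=> mB mC mT i; rewrite /entry_sets.
by do 2 case: ifP => _ //; apply: measurableI => //; exact: measurableC.
Qed.

Lemma entry_sets_last j : entry_sets j (m + j.+1) `<=` T.
Proof.
have mj : (m + j.+1 <= m)%N = false by lia.
by rewrite /entry_sets mj ltnn => s [].
Qed.

Lemma entry_cyl_trivIset : trivIset setT entry_cyl.
Proof.
have disj i j : (i < j)%N -> entry_cyl i `&` entry_cyl j = set0.
  move=> ij; apply/seteqP; split => // w /= [Ki Kj].
  have := Ki (m + i.+1)%N (leqnn _); have := Kj (m + i.+1)%N ltac:(lia).
  have mi : (m + i.+1 <= m)%N = false by lia.
  have mij : (m + i.+1 < m + j.+1)%N by lia.
  by rewrite /entry_sets mi mij ltnn => -[_ nTw] [Tw _].
apply/trivIsetP => i j _ _ ij; case: (ltngtP i j) => [lt_ij|lt_ji|eq_ij].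
- exact: disj.
- by rewrite setIC; exact: disj.
- by rewrite eq_ij eqxx in ij.
Qed.

Lemma entry_cyl_sub j : entry_cyl j `<=` cyl m (fun _ => C).
Proof. by move=> w Kw i im; have := Kw i ltac:(lia); rewrite /entry_sets im. Qed.

Lemma entry_cover : C `<=` ~` B ->
  evG C `&` evGF T `<=`
  \bigcup_j (entry_cyl j `&` [set w | forall i, ~ B (w (m + j.+1 + i)%N)]).
Proof.
move=> CB w [Cw GFw].
have exT : exists n, (m < n)%N && `[< T (w n) >].
  by have [n mn Tn] := GFw m.+1; exists n; rewrite mn; exact/asboolP.
case: (ex_minnP exT) => n /andP[mn /asboolP Tn] nmin.
have nE : n = (m + (n - m.+1).+1)%N by lia.
exists (n - m.+1)%N => //; rewrite /entry_cyl -nE; split; last first.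
  by move=> i; exact: CB (Cw _).
move=> i lin; rewrite /entry_sets -nE; case: ifP => im; first exact: Cw.
case: ifP => iln; last first.
  have -> : i = n by lia.
  by split => //; exact: CB (Cw n).
split; first exact: CB (Cw i).
move=> Ti; have := nmin i; rewrite (_ : (m < i)%N); last lia.
have -> : `[< T (w i) >] by exact/asboolP.
by move=> /(_ isT); lia.
Qed.

End first_entry.

Section escape.
Local Open Scope ereal_scope.
Context d (S : measurableType d) (R : realType) (k : R.-pker S ~> S).
Variable Pr : probability S R -> probability (runs S) R.
Hypothesis HPr : forall mu, is_run_measure k mu (Pr mu).
Variables (B T : set S) (mB : measurable B) (mT : measurable T) (p : R).
Hypothesis p_le1 : (p <= 1)%R.
Hypothesis reach_B : forall nu : probability S R, nu T = 1 -> p%:E <= Pr nu (evF B).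

(** Summing the one-visit bound over the first visit to T after time m. *)
Lemma escape_bound_cyl mu (C : set S) m : measurable C -> C `<=` ~` B ->
  Pr mu (evG C `&` evGF T) <= (1 - p)%:E * Pr mu (cyl m (fun _ => C)).
Proof.
move=> mC CB; set P := Pr mu.
have mK j : measurable (entry_cyl B C T m j).
  by apply: cyl_measurable; exact: entry_sets_measurable.
pose E j := entry_cyl B C T m j `&` [set w : runs S | forall i, ~ B (w (m + j.+1 + i)%N)].
have mE j : measurable (E j).
  by apply: measurableI => //; exact: always_from_measurable (measurableC mB).
have mCT : measurable (evG C `&` evGF T).
  by apply: measurableI; [exact: evG_measurable | exact: evGF_measurable].
apply: le_trans (measure_sigma_subadditive P mE mCT (entry_cover m CB)) _.
apply: (@le_trans _ _ (\sum_(j <oo) ((1 - p)%:E * P (entry_cyl B C T m j)))).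
  apply: lee_nneseries => [j _ _|j _]; first exact: measure_ge0.
  apply: (never_after_bound HPr mB mT reach_B) => //.
    exact: entry_sets_measurable.
  exact: entry_sets_last.
rewrite nneseriesZl; last by move=> j _; exact: measure_ge0.
rewrite -measure_semi_bigcup //; last exact: bigcupT_measurable.
- apply: lee_wpmul2l; first by rewrite lee_fin subr_ge0.
  apply: le_measure; rewrite ?inE //; first exact: bigcupT_measurable.
    exact: cyl_measurable.
  by move=> w [j _]; exact: entry_cyl_sub.
- exact: entry_cyl_trivIset.
Qed.

Lemma escape_bound mu (C : set S) : measurable C -> C `<=` ~` B ->
  Pr mu (evG C `&` evGF T) <= (1 - p)%:E * Pr mu (evG C).
Proof.
move=> mC CB; rewrite -[in X in _ <= X]bigcap_cyl.
apply: le_measure_bigcap; first by rewrite subr_ge0.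
- by move=> j; exact: cyl_measurable.
- exact: cyl_nonincreasing.
- by move=> m; exact: escape_bound_cyl.
Qed.

End escape.

Unset Implicit Arguments.

Theorem mainTheorem4 (d : measure_display) (S : measurableType d)
  (R : realType) (k : R.-pker S ~> S)
  (Pr : probability S R -> probability (runs S) R)
  (HPr : forall mu, is_run_measure k mu (Pr mu))
  (B A : set S) (mB : measurable B) (mA : measurable A)
  (mtB : measurable (tildeB Pr B))
  (attractor : forall mu : probability S R, Pr mu (evGF A) = 1%E)
  (p : R) (p_gt0 : 0 < p)
  (Hp : forall nu : probability S R,
      nu (A `&` ~` tildeB Pr B) = 1%E -> (p%:E <= Pr nu (evF B))%E) :
  decisive Pr B.
Proof.
move=> mu; set Bt := tildeB Pr B.
pose T := A `&` ~` Bt; pose C := ~` B `&` ~` Bt.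
have mT : measurable T by apply: measurableI => //; exact: measurableC.
have mC : measurable C by apply: measurableI; exact: measurableC.
have mGC : measurable (evG C) by exact: evG_measurable.
(* p may exceed 1; its truncation q still bounds the reachability of B. *)
pose q := Num.min p 1.
have q_gt0 : 0 < q by rewrite lt_min p_gt0 ltr01.
have q_le1 : q <= 1 by rewrite ge_min lexx orbT.
have reach_B (nu : probability S R) : nu T = 1%E -> (q%:E <= Pr nu (evF B))%E.
  by move/Hp; apply: le_trans; rewrite lee_fin ge_min lexx.
rewrite evF_setU probability_setC // (_ : Pr mu (evG C) = 0%E) ?sube0 //.
apply: (contraction_eq0 q_gt0); first exact: measure_ge0.
  rewrite ge0_fin_numE ?measure_ge0 //.
  by apply: le_lt_trans (probability_le1 _ mGC) _; rewrite ltry.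
apply: (@le_trans _ _ (Pr mu (evG C `&` evGF A))).
  by rewrite probability_setI_full //; exact: evGF_measurable.
rewrite (evG_setI_evGF A (_ : C `<=` ~` Bt)); last by move=> s [].
by apply: (escape_bound HPr mB mT q_le1 reach_B) => // s [].
Qed.
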